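(* Let $\Gamma$ be a numerical semigroup minimally generated by $r_0,\ldots,r_h$ with $h\ge 1$, and suppose $\Gamma$ is free with respect to the arrangement $(r_0,\ldots,r_h)$. For $k\in\{1,\ldots,h+1\}$ let $d_k=\gcd(r_0,\ldots,r_{k-1})$, and for $k\in\{1,\ldots,h\}$ let $e_k=d_k/d_{k+1}$. Then: (1) $\gcd(d_h,r_h)=1$; (2) $d_h$ divides $\mathrm F(\Gamma)+r_h$ (and consequently $d_h$ does not divide $\mathrm F(\Gamma)$); (3) $e_kr_k\in\langle r_0,\ldots,r_{k-1}\rangle$ for all $k=1,\ldots,h$; in particular $e_k\ge 2$; (4) $d_1>d_2>\cdots>d_{h+1}=1$; (5) $d_h\le \frac{\mathrm c(\Gamma)}{r_h-1}+1$; (6) $(d_h-1)(r_h-1)\ge 2^h$.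
   Context: A numerical semigroup is a submonoid of $(\mathbb N,+)$ with finite complement in $\mathbb N$; it has a unique minimal generating system. $\mathrm F(\Gamma)$ is the largest integer not in $\Gamma$ ($\mathrm F(\mathbb N)=-1$) and $\mathrm c(\Gamma)=\mathrm F(\Gamma)+1$. $\langle X\rangle$ denotes the submonoid generated by $X$. Gluing: if $A$ is a set of positive integers and $A=A_1\cup A_2$ a nontrivial partition, $A$ is the gluing of $A_1$ and $A_2$ if $\mathrm{lcm}(d_1',d_2')\in\langle A_1\rangle\cap\langle A_2\rangle$ where $d_i'=\gcd(A_i)$; if $A$ is the minimal generating set of $\Gamma$, one says $\Gamma$ is the gluing of the numerical semigroups $\langle A_1/d_1'\rangle$ and $\langle A_2/d_2'\rangle$. Freeness for an arrangement $(r_0,\ldots,r_h)$ of the minimal generators is defined recursively: $\Gamma$ is free if $h=0$ (so $\Gamma=\mathbb N$, $r_0=1$), or if $h\ge1$, $\{r_0,\ldots,r_h\}$ is the gluing of $\{r_0,\ldots,r_{h-1}\}$ and $\{r_h\}$, and $\Gamma_{h-1}=\langle r_0/d_h,\ldots,r_{h-1}/d_h\rangle$ is free for the arrangement $(r_0/d_h,\ldots,r_{h-1}/d_h)$. *)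

From mathcomp Require Import all_boot all_order all_algebra.
Set Implicit Arguments. Unset Strict Implicit. Unset Printing Implicit Defensive.
Import GRing.Theory Num.Theory.

Definition gen (A : seq nat) (n : nat) : Prop :=
  exists c : nat -> nat, n = \sum_(i < size A) c i * nth 0 A i.

Definition in_sg (A : seq nat) (z : int) : Prop :=
  exists n : nat, z = Posz n /\ gen A n.

Definition numerical (A : seq nat) : Prop :=
  exists N : nat, forall n : nat, N <= n -> gen A n.

Definition drop_at (i : nat) (A : seq nat) : seq nat := take i A ++ drop i.+1 A.

Definition minimal_gens (r : seq nat) : Prop :=
  numerical r /\ uniq r /\
  forall i, i < size r -> ~ gen (drop_at i r) (nth 0 r i).

Definition frobenius (A : seq nat) (f : int) : Prop :=
  ~ in_sg A f /\ forall z : int, (f < z)%R -> in_sg A z.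

(* gcd of a sequence (gcd of the empty sequence is 0) *)
Definition gcds (s : seq nat) : nat := \big[gcdn/0]_(x <- s) x.

Definition dk (r : seq nat) (k : nat) : nat := gcds (take k r).

Definition ek (r : seq nat) (k : nat) : nat := dk r k %/ dk r k.+1.

Definition glued_last (A1 : seq nat) (a : nat) : Prop :=
  gen A1 (lcmn (gcds A1) a) /\ gen [:: a] (lcmn (gcds A1) a).

Fixpoint free_aux (h : nat) (r : seq nat) : Prop :=
  match h with
  | 0 => r = [:: 1]
  | h'.+1 =>
      glued_last (take h r) (nth 0 r h) /\
      free_aux h' [seq x %/ gcds (take h r) | x <- take h r]
  end.

Definition free_arr (r : seq nat) : Prop := free_aux (size r).-1 r.

From mathcomp Require Import all_boot all_order all_algebra.
From mathcomp Require Import zify lra.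
Import Order.TTheory GRing.Theory Num.Theory.
Set Implicit Arguments. Unset Strict Implicit. Unset Printing Implicit Defensive.

(* Write d = d_h and a = r_h. Freeness gives e_k r_k in <r_0, ..., r_{k-1}>,
   by descending through the arrangements (r_0/d_h, ..., r_{h-1}/d_h), where the
   gluing condition is exactly this membership for the last generator.
   Minimality then forces e_k >= 2, and makes e_k r_k a sum of at least two of
   r_0, ..., r_{k-1}; by induction every r_i with i <= k is at least 2^k d_{k+1},
   so a >= 2^h, whence (6) (a is odd when d = 2).
   Every element of <r_0, ..., r_{h-1}> is a multiple of d and gcd(d, a) = 1, so
   m + c a + d + a = d a would give d | c + 1, which is too large: hence
   F >= d a - d - a, which is (5). Finally F + a lies in <r> but F does not, so a
   decomposition of F + a uses no copy of a, and d | F + a, which is (2). *)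

Lemma gen_nil n : gen [::] n <-> n = 0.
Proof.
split; first by case=> c ->; rewrite big_ord0.
by move=> ->; exists (fun _ => 0); rewrite big_ord0.
Qed.

Lemma gen_cons x A n : gen (x :: A) n <-> exists c m, gen A m /\ n = c * x + m.
Proof.
split.
- case=> c ->; rewrite /= big_ord_recl /=.
  exists (c 0), (\sum_(i < size A) c (lift ord0 i) * nth 0 A i); split=> //.
  by exists (fun i => c i.+1); apply: eq_bigr => i _; rewrite lift0.
- case=> c0 [m [[c ->] ->]].
  exists (fun i => if i is j.+1 then c j else c0).
  by rewrite /= big_ord_recl /=; congr (_ + _); apply: eq_bigr => i _; rewrite lift0.
Qed.

Lemma gen0 A : gen A 0.
Proof. by exists (fun _ => 0); rewrite big1. Qed.

Lemma gen_cat A B n :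
  gen (A ++ B) n <-> exists m m', [/\ gen A m, gen B m' & n = m + m'].
Proof.
elim: A n => [|x A IH] n /=.
  split=> [genBn | [m [m' [/gen_nil -> genBm' ->]]] //].
  by exists 0, n; split=> //; apply/gen_nil.
split.
- move=> /gen_cons [c [m [/IH [k [k' [genAk genBk' ->]]] ->]]].
  exists (c * x + k), k'; split=> //; last by rewrite addnA.
  by apply/gen_cons; exists c, k.
- case=> m [m' [/gen_cons [c [k [genAk ->]]] genBm' ->]].
  apply/gen_cons; exists c, (k + m'); split; last by rewrite addnA.
  by apply/IH; exists k, m'.
Qed.

Lemma gen_rcons A a n :
  gen (rcons A a) n <-> exists m c, gen A m /\ n = m + c * a.
Proof.
rewrite -cats1 gen_cat; split.
- case=> m [m' [genAm /gen_cons [c [k [/gen_nil -> ->]]] ->]].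
  by exists m, c; rewrite addn0.
- case=> m [c [genAm ->]]; exists m, (c * a); split=> //.
  by apply/gen_cons; exists c, 0; rewrite addn0; split=> //; apply/gen_nil.
Qed.

Lemma gen_mem A x c : x \in A -> gen A (c * x).
Proof.
elim: A => [|y A IH] //; rewrite inE => /predU1P [->|xA]; apply/gen_cons.
- by exists c, 0; rewrite addn0; split=> //; apply: gen0.
- by exists 0, (c * x); split; [apply: IH|].
Qed.

Lemma gen_dvd A d n : {in A, forall x, d %| x} -> gen A n -> d %| n.
Proof.
elim: A n => [|x A IH] n dvd_dA; first by move=> /gen_nil ->.
move=> /gen_cons [c [m [genAm ->]]].
apply: dvdn_add; first by rewrite dvdn_mull // dvd_dA ?mem_head.
by apply: IH genAm => y yA; rewrite dvd_dA // inE yA orbT.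

Qed.

Lemma gen_scale A d n : {in A, forall x, d %| x} ->
  gen [seq x %/ d | x <- A] n -> gen A (n * d).
Proof.
elim: A n => [|x A IH] n dvd_dA /=; first by move=> /gen_nil ->; apply: gen0.
move=> /gen_cons [c [m [genm ->]]]; apply/gen_cons; exists c, (m * d); split.
  by apply: IH => // y yA; rewrite dvd_dA // inE yA orbT.
by rewrite mulnDl -mulnA divnK // dvd_dA ?mem_head.
Qed.

Lemma gen_subr A n : gen A n -> 0 < n ->
  exists2 x, x \in A & x <= n /\ gen A (n - x).
Proof.
elim: A n => [|x A IH] n; first by move=> /gen_nil ->.
move=> /gen_cons [[|c] [m [genAm ->]]] n_gt0.
- have [y yA [le_ym genAmy]] := IH m genAm n_gt0.
  exists y; first by rewrite inE yA orbT.
  by split=> //; apply/gen_cons; exists 0, (m - y).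
- exists x; first exact: mem_head.
  split; first by rewrite mulSn -addnA leq_addr.
  by apply/gen_cons; exists c, m; split=> //; rewrite mulSn -addnA addKn.
Qed.

Lemma leq_double_gen A L n : gen A n -> 0 < n -> n \notin A ->
  {in A, forall x, L <= x} -> 2 * L <= n.
Proof.
move=> genAn n_gt0 nA leLA.
have [x xA [le_xn genAnx]] := gen_subr genAn n_gt0.
have nx_gt0 : 0 < n - x.
  by rewrite subn_gt0 ltn_neqAle le_xn andbT; apply: contraNneq nA => <-.
have [y yA [le_ynx _]] := gen_subr genAnx nx_gt0.
by have := leLA x xA; have := leLA y yA; lia.
Qed.

Lemma gcds_dvd s x : x \in s -> gcds s %| x.
Proof. by move=> xs; rewrite /gcds (big_rem x xs) /= dvdn_gcdl. Qed.

Lemma dvdn_gcds s d : {in s, forall x, d %| x} -> d %| gcds s.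
Proof.
move=> dvd_ds; rewrite /gcds big_seq.
by elim/big_ind: _ => // p q dp dq; rewrite dvdn_gcd dp.
Qed.

Lemma gcds_map_divn s d : 0 < d -> {in s, forall x, d %| x} ->
  gcds [seq x %/ d | x <- s] = gcds s %/ d.
Proof.
move=> d_gt0; elim: s => [|y s IH] dvd_ds; first by rewrite /gcds !big_nil div0n.
have dvd_ds' : {in s, forall x, d %| x} by move=> x xs; rewrite dvd_ds // inE xs orbT.
rewrite /gcds /= !big_cons -!/(gcds _) IH //.
have dvd_dy : d %| y by rewrite dvd_ds ?mem_head.
have dvd_dgs : d %| gcds s by rewrite dvdn_gcds.
apply/eqP; rewrite -(eqn_pmul2r d_gt0) muln_gcdl !divnK //.
by rewrite dvdn_gcd dvd_dy.
Qed.

Lemma dkS r k : k < size r -> dk r k.+1 = gcdn (dk r k) (nth 0 r k).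
Proof. by move=> lt_kr; rewrite /dk (take_nth 0 lt_kr) /gcds -cats1 big_cat big_seq1. Qed.

Lemma dvdn_dk r j k : j <= k -> dk r k %| dk r j.
Proof.
move=> le_jk; apply: dvdn_gcds => x; rewrite -(take_takel r le_jk) => /mem_take.
exact: gcds_dvd.
Qed.

Lemma dk_ek r k : dk r k = ek r k * dk r k.+1.
Proof. by rewrite /ek divnK // dvdn_dk. Qed.

Lemma ek_lcmn r k : k < size r -> ek r k * nth 0 r k = lcmn (dk r k) (nth 0 r k).
Proof. by move=> lt_kr; rewrite /ek dkS // divn_mulAC ?dvdn_gcdl. Qed.

Lemma dk_take r n k : k <= n -> dk (take n r) k = dk r k.
Proof. by move=> le_kn; rewrite /dk take_takel. Qed.

Lemma ek_take r n k : k < n -> ek (take n r) k = ek r k.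
Proof. by move=> lt_kn; rewrite /ek !dk_take // ltnW. Qed.

Lemma dk_map_divn r d k : 0 < d -> {in r, forall x, d %| x} ->
  dk [seq x %/ d | x <- r] k = dk r k %/ d.
Proof.
by move=> d_gt0 dvd_dr; rewrite /dk -map_take gcds_map_divn // => x /mem_take /dvd_dr.
Qed.

Lemma ek_map_divn r d k : 0 < d -> {in r, forall x, d %| x} ->
  ek [seq x %/ d | x <- r] k = ek r k.
Proof.
move=> d_gt0 dvd_dr; rewrite /ek !dk_map_divn //.
have dvd_d_dk j : d %| dk r j by apply: dvdn_gcds => x /mem_take /dvd_dr.
have [a ->] := dvdnP (dvd_d_dk k); have [b ->] := dvdnP (dvd_d_dk k.+1).
by rewrite !mulnK // divnMr.
Qed.

Lemma free_ek_gen h r : free_aux h r -> h < size r ->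
  forall k, 0 < k <= h -> gen (take k r) (ek r k * nth 0 r k).
Proof.
elim: h r => [|h IH] r; first by move=> _ _ k; lia.
move=> [[glued _] free_s] lt_hr k /andP [k_gt0 le_kh].
case: (ltngtP k h.+1) => [lt_kh||->]; [|by rewrite ltnNge le_kh|by rewrite ek_lcmn].
set r' := take h.+1 r in free_s; set d := gcds r' in free_s.
have dvd_dr' : {in r', forall x, d %| x} by move=> x; apply: gcds_dvd.
have size_r' : size r' = h.+1 by rewrite size_takel // ltnW.
have take_kr' : take k r' = take k r by rewrite take_takel // ltnW.
have [d0|d_gt0] := posnP d.
  (* junk case: the whole prefix r' vanishes, hence so does e_k *)
  have dk0 : dk r k = 0.
    apply/eqP; rewrite -dvd0n -d0 -(dk_take r (ltnW lt_kh)).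
    by apply: dvdn_gcds => x /mem_take /dvd_dr'.
  by rewrite /ek dk0 div0n mul0n; apply: gen0.
have := IH _ free_s; rewrite size_map size_r' => /(_ (ltnSn h) k).
rewrite k_gt0 -ltnS lt_kh -map_take ek_map_divn // ek_take //.
rewrite (nth_map 0) ?size_r' // nth_take // take_kr' => /(_ isT) /gen_scale.
rewrite -mulnA divnK; first by apply=> x; rewrite -take_kr' => /mem_take /dvd_dr'.
by rewrite -(nth_take 0 lt_kh) dvd_dr' // mem_nth // size_r'.
Qed.

Lemma numerical_gcds A : numerical A -> gcds A = 1.
Proof.
case=> N genA; have dvd_gA : {in A, forall x, gcds A %| x} by move=> x; apply: gcds_dvd.
have := gen_dvd dvd_gA (genA N.+1 (leqnSn N)).
by rewrite -addn1 dvdn_addr ?dvdn1 => [/eqP|]; last exact: gen_dvd dvd_gA (genA N _).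
Qed.

Lemma mem_drop_at r i j : i < size r -> i != j -> nth 0 r i \in drop_at j r.
Proof.
move=> lt_ir; rewrite /drop_at mem_cat; case: ltngtP => [lt_ij|lt_ji|//] _.
  by rewrite -(nth_take 0 lt_ij) mem_nth // size_take_min leq_min lt_ij.
rewrite -(subnKC lt_ji) -nth_drop mem_nth ?orbT // size_drop.
by rewrite ltn_sub2r // (leq_ltn_trans lt_ji lt_ir).
Qed.

Lemma gen_drop_at r k n : gen (take k r) n -> gen (drop_at k r) n.
Proof. by move=> genn; apply/gen_cat; exists n, 0; rewrite addn0; split=> //; apply: gen0. Qed.

Lemma minimal_gens_gt0 r : minimal_gens r -> {in r, forall x, 0 < x}.
Proof.
move=> [_ [_ min_r]] x xr; rewrite lt0n; apply: contraTneq isT => x0.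
by case: (min_r (index x r)); rewrite ?index_mem // nth_index // x0; apply: gen0.
Qed.

Lemma minimal_gens_neq_mul r i j c : minimal_gens r ->
  i < size r -> j < size r -> i != j -> nth 0 r j != c * nth 0 r i.
Proof.
move=> [_ [_ min_r]] lt_ir lt_jr ne_ij; apply/eqP => eq_j.
by apply: (min_r j lt_jr); rewrite eq_j; apply/gen_mem/mem_drop_at.
Qed.

Lemma gen_rcons_gap A a d n : {in A, forall x, d %| x} -> coprime d a ->
  gen (rcons A a) n -> n + d + a != d * a.
Proof.
move=> dvd_dA cop_da /gen_rcons [m [c [genAm ->]]]; apply/eqP => eq_da.
have [d0|d_gt0] := posnP d.
  by move: cop_da eq_da; rewrite d0 /coprime gcd0n => /eqP ->; lia.
have : d %| m + (c.+1 * a + d) by rewrite (_ : _ + _ = d * a) ?dvdn_mulr // mulSn; lia.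
rewrite (dvdn_addr _ (gen_dvd dvd_dA genAm)) dvdn_addl // Gauss_dvdl // => /dvdn_leq.
by move=> /(_ isT) /(leq_mul (leqnn a)); lia.
Qed.

Lemma gen_rcons_dvdn A a d f : {in A, forall x, d %| x} ->
  ~ gen (rcons A a) f -> gen (rcons A a) (f + a) -> d %| f + a.
Proof.
move=> dvd_dA notin_f /gen_rcons [m [[|c] [genAm eq_fa]]].
  by rewrite eq_fa mul0n addn0; apply: gen_dvd genAm.
by case: notin_f; apply/gen_rcons; exists m, c; split=> //; move: eq_fa; rewrite mulSn; lia.
Qed.

Lemma expn2_leq_mul_pred h d a : 0 < h -> 2 <= d -> 2 ^ h <= a -> coprime d a ->
  2 ^ h <= (d - 1) * (a - 1).
Proof.
move=> h_gt0 d_ge2 le_2h_a cop_da.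
have odd_2h : ~~ odd (2 ^ h) by rewrite oddX /= orbF -lt0n.
set p := 2 ^ h in le_2h_a odd_2h *.
have p_ge2 : 2 <= p by rewrite -(expn1 2) leq_pexp2l.
have [d_gt2|d_le2] := ltnP 2 d.
  have : 2 * (p - 1) <= (d - 1) * (a - 1) by apply: leq_mul; lia.
  by lia.
have d2 : d = 2 by lia.
have : a != p by apply: contraTneq cop_da => ->; rewrite d2 coprime2n.
by rewrite d2; lia.
Qed.

Lemma ler_conductor_div (R : realFieldType) (d a : nat) (F : int) : 1 < a ->
  ((d * a)%:Z <= F + d%:Z + a%:Z)%R ->
  (d%:R <= (F + 1)%:~R / (a%:R - 1) + 1 :> R)%R.
Proof.
move=> a_gt1; rewrite -(ler_int R) !rmorphD /= -!pmulrn natrM => le_da.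
have a_ge2 : (2%:R <= a%:R :> R)%R by rewrite ler_nat.
rewrite -lerBlDr ler_pdivlMr; last by lra.
by nra.
Qed.

Section FreeArrangement.

Variables (h : nat) (r : seq nat).
Hypotheses (size_r : size r = h.+1) (min_r : minimal_gens r) (free_r : free_arr r).

Let r_gt0 : {in r, forall x, 0 < x} := minimal_gens_gt0 min_r.

Lemma dk_last : dk r h.+1 = 1.
Proof. by rewrite /dk -size_r take_size numerical_gcds //; case: min_r. Qed.

Lemma rcons_take_last : r = rcons (take h r) (nth 0 r h).
Proof. by rewrite -take_nth ?size_r // -size_r take_size. Qed.

Lemma ek_gen k : 0 < k <= h -> gen (take k r) (ek r k * nth 0 r k).
Proof.
by apply: free_ek_gen; [move: free_r; rewrite /free_arr size_r | rewrite size_r].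
Qed.

Lemma dk_gt0 k : 0 < k -> 0 < dk r k.
Proof.
move=> k_gt0; apply: dvdn_gt0 (dvdn_dk r k_gt0).
by rewrite dkS ?size_r // /dk take0 /gcds big_nil gcd0n r_gt0 // mem_nth ?size_r.
Qed.

Lemma ek_gt1 k : 0 < k <= h -> 1 < ek r k.
Proof.
move=> /andP [k_gt0 le_kh]; have := dk_gt0 k_gt0; rewrite dk_ek.
case E : (ek r k) => [|[|//]] // _; case: min_r => _ [_ min_gens].
by case: (min_gens k); rewrite ?size_r // -(mul1n (nth 0 r k)) -E;
  apply/gen_drop_at/ek_gen; rewrite k_gt0.
Qed.

Lemma dk_ltn k : 0 < k <= h -> dk r k.+1 < dk r k.
Proof.
move=> lt0kh; have /andP [k_gt0 _] := lt0kh.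
by rewrite [ltnRHS]dk_ek ltn_Pmull ?ek_gt1 // dk_gt0.
Qed.

Lemma dk_gt1_last : 0 < h -> 1 < dk r h.
Proof. by move=> h_gt0; rewrite dk_ek dk_last muln1 ek_gt1 // h_gt0 leqnn. Qed.

Lemma coprime_dk_last : coprime (dk r h) (nth 0 r h).
Proof. by rewrite /coprime -dkS ?size_r // dk_last. Qed.

Lemma ek_mul_notin k : 0 < k <= h -> ek r k * nth 0 r k \notin take k r.
Proof.
move=> /andP [k_gt0 le_kh]; apply/(nthP 0) => [[j lt_j]].
have lt_jk : j < k by move: lt_j; rewrite size_take_min leq_min => /andP [].
rewrite nth_take //; apply/eqP/minimal_gens_neq_mul; rewrite ?size_r ?(gtn_eqF lt_jk) //.
by rewrite (ltn_trans lt_jk).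
Qed.

Lemma expn2_dk_leq_take k x : k <= h -> x \in take k.+1 r -> 2 ^ k * dk r k.+1 <= x.
Proof.
elim: k x => [|k IH] x le_kh.
  by move=> x1; rewrite mul1n dvdn_leq ?r_gt0 ?gcds_dvd // (mem_take x1).
have lt0kh : 0 < k.+1 <= h := le_kh.
have dk_kS := dk_ek r k.+1; have ek_gt1_k := ek_gt1 lt0kh.
rewrite (take_nth 0) ?size_r // mem_rcons inE => /predU1P [->|xk]; last first.
  by have := IH x (ltnW le_kh) xk; rewrite dk_kS expnS; nia.
have := leq_double_gen (ek_gen lt0kh) _ (ek_mul_notin lt0kh) (IH ^~ (ltnW le_kh)).
have a_gt0 : 0 < nth 0 r k.+1 by rewrite r_gt0 // mem_nth ?size_r.
rewrite muln_gt0 a_gt0 (ltnW ek_gt1_k) dk_kS expnS => /(_ isT).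
by nia.
Qed.

Lemma expn2_leq_last : 2 ^ h <= nth 0 r h.
Proof.
have := @expn2_dk_leq_take h (nth 0 r h) (leqnn h); rewrite dk_last muln1; apply.
by rewrite (take_nth 0) ?size_r // mem_rcons mem_head.
Qed.

End FreeArrangement.

Theorem lemma3p3 (h : nat) (r : seq nat) (F : int) :
  (1 <= h)%N -> size r = h.+1 -> minimal_gens r -> free_arr r -> frobenius r F ->
  (* (1) *) coprime (dk r h) (nth 0 r h) /\
  (* (2) *) ((Posz (dk r h) %| (F + Posz (nth 0 r h))%R)%Z /\ ~~ (Posz (dk r h) %| F)%Z) /\
  (* (3) *) (forall k, (1 <= k <= h)%N ->
               gen (take k r) (ek r k * nth 0 r k) /\ (2 <= ek r k)%N) /\
  (* (4) *) ((forall k, (1 <= k <= h)%N -> (dk r k.+1 < dk r k)%N) /\ dk r h.+1 = 1%N) /\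
  (* (5) *) ((dk r h)%:R <= (F + 1)%:~R / ((nth 0 r h)%:R - 1) + 1 :> rat)%R /\
  (* (6) *) (2 ^ h <= (dk r h - 1) * (nth 0 r h - 1))%N.
Proof.
move=> h_gt0 size_r min_r free_r [F_notin F_max].
have cop_da := coprime_dk_last size_r min_r.
have d_gt1 := dk_gt1_last size_r min_r free_r h_gt0.
have a_ge := expn2_leq_last size_r min_r free_r.
have dvd_dA : {in take h r, forall x, dk r h %| x} by move=> x; apply: gcds_dvd.
set d := dk r h in cop_da d_gt1 dvd_dA *; set a := nth 0 r h in cop_da a_ge *.
have a_gt1 : 1 < a by apply: leq_trans a_ge; rewrite -(expn1 2) leq_pexp2l.
rewrite (rcons_take_last size_r) in F_notin F_max.
have F_ge : ((d * a)%:Z - d%:Z - a%:Z <= F)%R.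
  rewrite leNgt; apply/negP => /F_max [n [eq_n /(gen_rcons_gap dvd_dA cop_da) /eqP]].
  by apply; lia.
have [f eq_F] : exists f, F = Posz f by exists `|F|%N; rewrite gez0_abs //; nia.
subst F.
have dvd_fa : d %| f + a.
  apply: (gen_rcons_dvdn dvd_dA) => [genf|]; first by apply: F_notin; exists f.
  by have [n [[<-] genn]] := F_max (Posz (f + a)) ltac:(lia).
have ndvd_df : ~~ (d %| f).
  apply: contraL cop_da => dvd_df; rewrite /coprime (gcdn_idPl _) ?gtn_eqF //.
  by rewrite -(dvdn_addr _ dvd_df).
split=> //; split; first by rewrite -PoszD.
split=> [k k_range|].
  by split; [apply: (ek_gen size_r free_r) | apply: (ek_gt1 size_r min_r free_r)].
split; first by split; [apply: (dk_ltn size_r min_r free_r) | apply: (dk_last size_r min_r)].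
split; first by apply: ler_conductor_div => //; lia.
exact: expn2_leq_mul_pred.
Qed.
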